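(* For $m\ge3$, no single contraction of the Lie algebra $\mathfrak{po}(m)$ yields a Lie algebra isomorphic to $\mathfrak{po}((1),\dots,(1))$ ($m$ copies of $(1)$).
   Context: $\mathfrak{po}(m)$ is the Lie algebra of the image $\mathrm{PO}(m)$ of $\mathrm{O}(m)$ in $\mathrm{PGL}_m\mathbb{R}$ (isomorphic to $\mathfrak{so}(m)$). $\mathfrak{po}((1),\dots,(1))$ is the Lie algebra of the image in $\mathrm{PGL}_m\mathbb{R}$ of the group of lower-triangular real matrices with diagonal entries $\pm1$; it is isomorphic to the Lie algebra of strictly lower-triangular real $m\times m$ matrices. Contraction: for a Lie algebra $\mathfrak{h}$, a Lie subalgebra $\mathfrak{t}$ with complementary subspace $\mathfrak{t}^c$ and $\phi_\varepsilon(X)=X_{\mathfrak{t}}+\varepsilon X_{\mathfrak{t}^c}$ ($\varepsilon>0$), the contraction along $\mathfrak{t}$ is the vector space of $\mathfrak{h}$ with bracket $[X,Y]'=\lim_{\varepsilon\to0}\phi_\varepsilon^{-1}([\phi_\varepsilon(X),\phi_\varepsilon(Y)])$. *)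

From HB Require Import structures.
From mathcomp Require Import all_boot all_order all_algebra.
From mathcomp Require Import all_classical all_reals all_analysis.
Unset Printing Implicit Defensive.
Import Order.TTheory GRing.Theory Num.Theory.
Import numFieldNormedType.Exports.
Local Open Scope classical_set_scope.
Local Open Scope ring_scope.

Definition lie {R : realType} {m : nat} (A B : 'M[R]_m) : 'M[R]_m :=
  A *m B - B *m A.

(* so(m): real skew-symmetric matrices (Lie algebra of O(m), isomorphic to po(m)) *)
Definition so_set (R : realType) (m : nat) : set 'M[R]_m :=
  [set A | A^T = - A].

(* strictly lower-triangular matrices (isomorphic to po((1),...,(1))) *)
Definition slt_set (R : realType) (m : nat) : set 'M[R]_m :=
  [set A | forall i j : 'I_m, (val i <= val j)%N -> A i j = 0].

Definition is_subspace {R : realType} {m : nat} (V : set 'M[R]_m) : Prop :=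
  V 0 /\ forall (a : R) (X Y : 'M[R]_m), V X -> V Y -> V (a *: X + Y).

Definition is_lie_subalgebra_so {R : realType} {m : nat} (t : set 'M[R]_m) : Prop :=
  is_subspace t /\ t `<=` so_set R m /\
  forall X Y, t X -> t Y -> t (lie X Y).

Definition is_complement_so {R : realType} {m : nat} (t tc : set 'M[R]_m) : Prop :=
  is_subspace tc /\ tc `<=` so_set R m /\ t `&` tc = [set 0] /\
  forall X, so_set R m X -> exists2 Xt, t Xt & tc (X - Xt).

Definition comp_t {R : realType} {m : nat} (t tc : set 'M[R]_m) (X : 'M[R]_m) : 'M[R]_m :=
  xget 0 [set U | t U /\ tc (X - U)].

Definition phi {R : realType} {m : nat} (t tc : set 'M[R]_m) (e : R) (X : 'M[R]_m) :=
  comp_t t tc X + e *: (X - comp_t t tc X).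

Definition phi_inv {R : realType} {m : nat} (t tc : set 'M[R]_m) (e : R) (X : 'M[R]_m) :=
  comp_t t tc X + e^-1 *: (X - comp_t t tc X).

Definition contr_bracket {R : realType} {m : nat} (t tc : set 'M[R]_m) (X Y : 'M[R]_m)
  : 'M[R]_m :=
  lim ((fun e : R => phi_inv t tc e (lie (phi t tc e X) (phi t tc e Y))) @ 0^'+).

Definition contraction_iso_slt {R : realType} {m : nat} (t tc : set 'M[R]_m)
  (f : 'M[R]_m -> 'M[R]_m) : Prop :=
  [/\ (forall X, so_set R m X -> slt_set R m (f X)),
      (forall (a : R) X Y, so_set R m X -> so_set R m Y -> f (a *: X + Y) = a *: f X + f Y),
      (forall X Y, so_set R m X -> so_set R m Y -> f X = f Y -> X = Y),
      (forall Z, slt_set R m Z -> exists2 X, so_set R m X & f X = Z) &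
      (forall X Y, so_set R m X -> so_set R m Y ->
         f (contr_bracket t tc X Y) = lie (f X) (f Y))].

(* Let f identify the contraction of so(m) along t with the strictly lower
   triangular matrices.  For X in t the contracted adjoint ad'_X is nilpotent,
   being conjugate by f to the adjoint of a strictly lower triangular matrix;
   it agrees with ad_X on t and differs from ad_X by elements of t.  Hence
   ad_X^m maps so(m) into t and ad_X^(2m) = 0.  As X is skew-symmetric, ad_X is
   skew-adjoint for the trace form, hence semisimple, so ad_X = 0 and X is
   central in so(m), i.e. X = 0 when m >= 3.  So t = 0 and the contracted
   bracket vanishes, whereas strictly lower triangular matrices do not commute
   for m >= 3. *)

From mathcomp Require Import all_boot all_order all_algebra.
From mathcomp Require Import all_classical all_reals all_analysis.
From mathcomp Require Import ring lra zify.
Import Order.TTheory GRing.Theory Num.Theory.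
Local Open Scope classical_set_scope.
Local Open Scope ring_scope.

Lemma lim_at_right_quadratic {R : realType} {V : normedModType R}
    (P Q S : V) (g : R -> V) :
  (forall e : R, 0 < e -> g e = P + e *: Q + (e * e) *: S) ->
  lim (g @ 0^'+) = P.
Proof.
move=> gE; have poly_cvg : (fun e : R => P + e *: Q + (e * e) *: S) @ 0^'+ --> P.
  apply: cvg_at_right_filter.
  have {2}-> : P = P + (0 : R) *: Q + ((0 : R) * 0) *: S.
    by rewrite mul0r !scale0r !addr0.
  apply: cvgD; first apply: cvgD; first exact: cvg_cst.
    by apply: cvgZr_tmp; exact: cvg_id.
  by apply: cvgZr_tmp; apply: cvgM; exact: cvg_id.
apply: cvg_lim; first exact: norm_hausdorff.
apply: cvg_trans poly_cvg; apply: near_eq_cvg.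
by apply: filterS (nbhs_right_gt 0) => e /gE.
Qed.

Lemma exists_ord_neq2 {m : nat} (i j : 'I_m) : (3 <= m)%N ->
  exists k : 'I_m, (k != i) && (k != j).
Proof.
move=> m_ge3; have : (0 < #|~: [set i; j]|)%N.
  by rewrite cardsCs finset.setCK cards2 card_ord; case: (i != j); lia.
by case/card_gt0P => k; rewrite !inE negb_or; exists k.
Qed.

Section Subspace.
Context {R : realType} {m : nat}.
Implicit Types (V : set 'M[R]_m) (X Y : 'M[R]_m).

Lemma subspaceZ {V} a {X} : is_subspace V -> V X -> V (a *: X).
Proof. by move=> [V0 VZD] VX; have := VZD a X 0 VX V0; rewrite addr0. Qed.

Lemma subspaceD {V X Y} : is_subspace V -> V X -> V Y -> V (X + Y).
Proof. by move=> [_ VZD] VX VY; have := VZD 1 X Y VX VY; rewrite scale1r. Qed.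

Lemma subspaceB {V X Y} : is_subspace V -> V X -> V Y -> V (X - Y).
Proof.
by move=> [_ VZD] VX VY; have := VZD (-1) Y X VY VX; rewrite scaleN1r addrC.
Qed.

Lemma so_subspace : is_subspace (so_set R m).
Proof.
split=> [|a X Y]; first by rewrite /so_set /= trmx0 oppr0.
by rewrite /so_set /= => X_so Y_so; rewrite linearP /= X_so Y_so scalerN opprD.
Qed.

End Subspace.

Section Commutator.
Context {R : realType} {m : nat}.
Implicit Types (X Y Z : 'M[R]_m).

Lemma so_lie {X Y} : so_set R m X -> so_set R m Y -> so_set R m (lie X Y).
Proof.
rewrite /so_set /lie /= => X_so Y_so.
by rewrite linearB /= !trmx_mul X_so Y_so !mulmxN !mulNmx !opprK opprB.
Qed.

Lemma lieDl X Y Z : lie (X + Y) Z = lie X Z + lie Y Z.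
Proof. by rewrite /lie mulmxDl mulmxDr opprD addrACA. Qed.

Lemma lieDr X Y Z : lie X (Y + Z) = lie X Y + lie X Z.
Proof. by rewrite /lie mulmxDl mulmxDr opprD addrACA. Qed.

Lemma lieZl a X Y : lie (a *: X) Y = a *: lie X Y.
Proof. by rewrite /lie -scalemxAl -scalemxAr scalerBr. Qed.

Lemma lieZr a X Y : lie X (a *: Y) = a *: lie X Y.
Proof. by rewrite /lie -scalemxAl -scalemxAr scalerBr. Qed.

Lemma lieBr X Y Z : lie X (Y - Z) = lie X Y - lie X Z.
Proof. by rewrite -scaleN1r lieDr lieZr scaleN1r. Qed.

Lemma lie0l X : lie 0 X = 0.
Proof. by rewrite /lie mulmx0 mul0mx subrr. Qed.

Lemma lie0r X : lie X 0 = 0.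
Proof. by rewrite /lie mulmx0 mul0mx subrr. Qed.

End Commutator.

Section SkewSymmetric.
Context {R : realType} {m : nat}.
Implicit Types (X Y Z A B : 'M[R]_m).
Local Notation so := (so_set R m).

Definition trdot A B := \tr (A *m B^T).

Lemma trdot_lie_so X A B : so X -> trdot (lie X A) B = - trdot A (lie X B).
Proof.
rewrite /so_set /trdot /lie /= => X_so.
rewrite !linearB /= !trmx_mul X_so mulmxN mulNmx opprK.
rewrite mulmxBl linearB /= !mulmxN !linearN /= opprK !mulmxA; congr (_ - _).
by rewrite [RHS]mxtrace_mulC mulmxA.
Qed.

Lemma trdot_self_eq0 A : trdot A A = 0 -> A = 0.
Proof.
have sqr_ge0 i j : 0 <= A i j * A i j by rewrite -expr2 sqr_ge0.
have diagE i : (A *m A^T) i i = \sum_j A i j * A i j.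
  by rewrite mxE; apply: eq_bigr => j _; rewrite mxE.
have diag_ge0 i : 0 <= (A *m A^T) i i by rewrite diagE sumr_ge0.
move=> trAA0; apply/matrixP => i j; rewrite mxE.
have diag0 := psumr_eq0P (fun i _ => diag_ge0 i) trAA0.
have rowi0 : \sum_j A i j * A i j = 0 by rewrite -diagE diag0.
have /eqP := psumr_eq0P (fun k _ => sqr_ge0 i k) rowi0 (i := j) isT.
by rewrite mulf_eq0 orbb => /eqP.
Qed.

Lemma so_lie_lie_eq0 X Y : so X -> lie X (lie X Y) = 0 -> lie X Y = 0.
Proof.
move=> X_so XXY0; apply: trdot_self_eq0.
by rewrite trdot_lie_so // XXY0 /trdot trmx0 mulmx0 linear0 oppr0.
Qed.

Lemma so_iter_lie_eq0 X Y n : so X -> iter n.+1 (lie X) Y = 0 -> lie X Y = 0.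
Proof.
move=> X_so; elim: n Y => [|n IHn] Y //.
by rewrite iterSr => /IHn; exact: so_lie_lie_eq0.
Qed.

Lemma so_center_eq0 X : (3 <= m)%N -> so X ->
  (forall Y, so Y -> lie X Y = 0) -> X = 0.
Proof.
move=> m_ge3 X_so X_central; apply/matrixP => i a; rewrite mxE.
have [<-|ne_ia] := eqVneq i a.
  by have := congr1 (fun M : 'M[R]_m => M i i) X_so; rewrite !mxE; lra.
have [b /andP[ne_bi ne_ba]] := exists_ord_neq2 i a m_ge3.
pose A : 'M[R]_m := delta_mx a b - delta_mx b a.
have A_so : so A by rewrite /so_set /= linearB /= !trmx_delta opprB.
have rowA j : A i j = 0.
  by rewrite !mxE (negbTE ne_ia) [i == b]eq_sym (negbTE ne_bi) subrr.
have colA j : A j b = (j == a)%:R.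
  by rewrite !mxE eqxx (negbTE ne_ba) andbF subr0 andbT.
clearbody A; have := congr1 (fun M : 'M[R]_m => M i b) (X_central A A_so).
rewrite /lie !mxE (bigD1 a) //= colA eqxx mulr1.
rewrite big1 => [|j ne_ja]; last by rewrite colA (negbTE ne_ja) mulr0.
rewrite big1 => [|j _]; last by rewrite rowA mul0r.
by rewrite addr0 subr0.
Qed.

End SkewSymmetric.

Section LowerFiltration.
Context {R : realType} {m : nat}.
Implicit Types (A B Z W : 'M[R]_m).

Definition lower_by (d : nat) A := forall i j : 'I_m, (i < j + d)%N -> A i j = 0.

Lemma slt_lower_by1 A : slt_set R m A -> lower_by 1 A.
Proof. by move=> A_slt i j; rewrite addn1 ltnS; exact: A_slt. Qed.

Lemma lower_by_mul {a b A B} :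
  lower_by a A -> lower_by b B -> lower_by (a + b) (A *m B).
Proof.
move=> A_low B_low i j lt_ij; rewrite mxE big1 // => k _.
have [lt_ik|le_ki] := ltnP i (k + a); first by rewrite A_low ?mul0r.
by rewrite B_low ?mulr0 //; lia.
Qed.

Lemma lower_by_lie d Z W : lower_by 1 Z -> lower_by d W -> lower_by d.+1 (lie Z W).
Proof.
move=> Z_low W_low i j lt_ij.
have ZW0 : (Z *m W) i j = 0 by apply: (lower_by_mul Z_low W_low); lia.
have WZ0 : (W *m Z) i j = 0 by apply: (lower_by_mul W_low Z_low); lia.
by rewrite /lie mxE [X in _ + X]mxE ZW0 WZ0 subr0.
Qed.

Lemma lower_by_eq0 {d A} : (m <= d)%N -> lower_by d A -> A = 0.
Proof.
move=> le_md A_low; apply/matrixP => i j; rewrite mxE A_low //.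
by have := ltn_ord i; lia.
Qed.

Lemma lower_by_iter_lie k Z W : lower_by 1 Z -> lower_by 1 W ->
  lower_by k.+1 (iter k (lie Z) W).
Proof. by move=> Z_low W_low; elim: k => [|k IHk] //=; exact: lower_by_lie. Qed.

Lemma slt_iter_lie_eq0 Z W :
  slt_set R m Z -> slt_set R m W -> iter m (lie Z) W = 0.
Proof.
move=> /slt_lower_by1 Z_low /slt_lower_by1 W_low.
exact: lower_by_eq0 (leqnSn m) (lower_by_iter_lie m Z W Z_low W_low).
Qed.

Lemma slt_delta_mx (r c : 'I_m) : (c < r)%N -> slt_set R m (delta_mx r c).
Proof.
move=> lt_cr i j le_ij; rewrite mxE.
have [eq_ir | _] := eqVneq i r; have [eq_jc | _] := eqVneq j c => //.
by move: le_ij lt_cr; rewrite eq_ir eq_jc leqNgt => /negP.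
Qed.

Lemma slt_nonabelian : (3 <= m)%N ->
  exists Z W, [/\ slt_set R m Z, slt_set R m W & lie Z W <> 0].
Proof.
move=> m_ge3; have lt0m : (0 < m)%N by lia.
have lt1m : (1 < m)%N by lia.
pose i0 := Ordinal lt0m; pose i1 := Ordinal lt1m; pose i2 := Ordinal m_ge3.
exists (delta_mx i1 i0), (delta_mx i2 i1); split; try exact: slt_delta_mx.
rewrite /lie mul_delta_mx mul_delta_mx_0 // sub0r.
move=> /(congr1 (fun M : 'M[R]_m => M i2 i0)).
by rewrite !mxE !eqxx /= => /eqP; rewrite oppr_eq0 oner_eq0.
Qed.

End LowerFiltration.

Section Contraction.
Context {R : realType} {m : nat} {t tc : set 'M[R]_m}.
Hypotheses (t_alg : is_lie_subalgebra_so t) (tc_compl : is_complement_so t tc).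
Implicit Types (X Y U W A B C : 'M[R]_m).
Local Notation so := (so_set R m).
Local Notation cp := (comp_t t tc).
Local Notation contr := (contr_bracket t tc).

Let t_sub : is_subspace t := t_alg.1.
Let t_so : t `<=` so := t_alg.2.1.
Let t_lie X Y : t X -> t Y -> t (lie X Y) := t_alg.2.2 X Y.
Let tc_sub : is_subspace tc := tc_compl.1.
Let tc_so : tc `<=` so := tc_compl.2.1.

Lemma comp_t_uniq X U : t U -> tc (X - U) -> cp X = U.
Proof.
move=> U_t XU_tc; apply: xget_unique => // V [V_t XV_tc].
have : (t `&` tc) (V - U).
  split; first exact: subspaceB.
  have -> : V - U = (X - U) - (X - V) by rewrite opprB [RHS]addrC addrA subrK.
  exact: subspaceB.
by rewrite tc_compl.2.2.1 => /subr0_eq.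
Qed.

Lemma comp_tP {X} : so X -> t (cp X) /\ tc (X - cp X).
Proof.
move=> X_so; apply: (@xgetPex _ 0 [set U | t U /\ tc (X - U)]).
by have [U] := tc_compl.2.2.2 X X_so; exists U.
Qed.

Lemma comp_t_id X : t X -> cp X = X.
Proof. by move=> X_t; apply: comp_t_uniq; rewrite ?subrr; [|exact: tc_sub.1]. Qed.

Lemma comp_t0 : cp 0 = 0.
Proof. exact/comp_t_id/t_sub.1. Qed.

Lemma comp_tD X Y : so X -> so Y -> cp (X + Y) = cp X + cp Y.
Proof.
move=> /comp_tP[Xt Xc] /comp_tP[Yt Yc]; apply: comp_t_uniq; first exact: subspaceD.
by rewrite opprD addrACA; exact: subspaceD.
Qed.

Lemma comp_tZ a X : so X -> cp (a *: X) = a *: cp X.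
Proof.
move=> /comp_tP[Xt Xc]; apply: comp_t_uniq; first exact: subspaceZ.
by rewrite -scalerBr; exact: subspaceZ.
Qed.

Lemma phi_inv_quadratic (e : R) A B C : e != 0 -> t A -> so B -> so C ->
  phi_inv t tc e (A + e *: B + (e * e) *: C) =
  A + (B - cp B) + e *: (cp B + (C - cp C)) + (e * e) *: cp C.
Proof.
move=> e_neq0 A_t B_so C_so; have A_so := t_so _ A_t.
have eB_so := subspaceZ e so_subspace B_so.
have eeC_so := subspaceZ (e * e) so_subspace C_so.
rewrite /phi_inv !comp_tD ?comp_tZ ?[cp A]comp_t_id //.
  by apply/matrixP => i j; rewrite !mxE; field.
exact: subspaceD so_subspace A_so eB_so.
Qed.

Lemma contr_bracketE X Y : so X -> so Y ->
  contr X Y = lie (cp X) (cp Y) +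
    (lie (cp X) (Y - cp Y) + lie (X - cp X) (cp Y)
     - cp (lie (cp X) (Y - cp Y) + lie (X - cp X) (cp Y))).
Proof.
move=> /comp_tP[Xt Xc] /comp_tP[Yt Yc].
have [Xt_so Yt_so] := (t_so _ Xt, t_so _ Yt).
have [Xc_so Yc_so] := (tc_so _ Xc, tc_so _ Yc).
set B := lie (cp X) (Y - cp Y) + _; set C := lie (X - cp X) (Y - cp Y).
have B_so : so B := subspaceD so_subspace (so_lie Xt_so Yc_so) (so_lie Xc_so Yt_so).
have C_so : so C := so_lie Xc_so Yc_so.
apply: (lim_at_right_quadratic _ (cp B + (C - cp C)) (cp C)) => e e_gt0.
have -> : lie (phi t tc e X) (phi t tc e Y) =
           lie (cp X) (cp Y) + e *: B + (e * e) *: C.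
  rewrite /phi lieDl !lieDr !lieZl !lieZr.
  by apply/matrixP => i j; rewrite !mxE; ring.
by rewrite phi_inv_quadratic ?gt_eqF //; exact: t_lie.
Qed.

Lemma contr_bracket_so X Y : so X -> so Y -> so (contr X Y).
Proof.
move=> X_so Y_so; have [Xt Xc] := comp_tP X_so; have [Yt Yc] := comp_tP Y_so.
have [Xt_so Yt_so] := (t_so _ Xt, t_so _ Yt).
have [Xc_so Yc_so] := (tc_so _ Xc, tc_so _ Yc).
have B_so := subspaceD so_subspace (so_lie Xt_so Yc_so) (so_lie Xc_so Yt_so).
rewrite contr_bracketE //; apply: subspaceD so_subspace (so_lie Xt_so Yt_so) _.
exact/tc_so/(comp_tP B_so).2.
Qed.

Lemma contr_bracket_tl X Y : t X -> so Y ->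
  contr X Y = lie X (cp Y) + (lie X (Y - cp Y) - cp (lie X (Y - cp Y))).
Proof.
move=> X_t Y_so; have X_so := t_so _ X_t.
by rewrite contr_bracketE // [cp X]comp_t_id // subrr !lie0l !addr0.
Qed.

Lemma lie_sub_contr_bracket_in_t X Y : t X -> so Y -> t (lie X Y - contr X Y).
Proof.
move=> X_t Y_so; set P := lie X (Y - cp Y).
have P_so : so P := so_lie (t_so _ X_t) (tc_so _ (comp_tP Y_so).2).
have -> : lie X Y - contr X Y = cp P.
  have lieXY : lie X Y = lie X (cp Y) + P by rewrite /P lieBr addrC subrK.
  by rewrite contr_bracket_tl // lieXY opprD addrACA subrr add0r opprB addrC subrK.
exact: (comp_tP P_so).1.
Qed.

Lemma contr_bracket_tt X W : t X -> t W -> contr X W = lie X W.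
Proof.
move=> X_t W_t; rewrite contr_bracket_tl ?[cp W]comp_t_id //; last exact: t_so.
by rewrite subrr lie0r comp_t0 subrr addr0.
Qed.

Section Isomorphism.
Variable f : 'M[R]_m -> 'M[R]_m.
Hypothesis f_iso : contraction_iso_slt t tc f.

Lemma iso_f0 : f 0 = 0.
Proof.
have [_ f_lin _ _ _] := f_iso; have so0 : so 0 := so_subspace.1.
by have := f_lin (-1) 0 0 so0 so0; rewrite scaler0 addr0 scaleN1r addNr.
Qed.

Lemma iter_contr_bracket_so k X Y : so X -> so Y -> so (iter k (contr X) Y).
Proof. by move=> X_so Y_so; elim: k => [|k IHk] //=; exact: contr_bracket_so. Qed.

Lemma iso_iter_contr_bracket k X Y : so X -> so Y ->
  f (iter k (contr X) Y) = iter k (lie (f X)) (f Y).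
Proof.
have [_ _ _ _ f_hom] := f_iso; move=> X_so Y_so; elim: k => [|k IHk] //=.
by rewrite f_hom ?IHk //; exact: iter_contr_bracket_so.
Qed.

Lemma iter_contr_bracket_eq0 X Y : so X -> so Y -> iter m (contr X) Y = 0.
Proof.
have [f_slt _ f_inj _ _] := f_iso; move=> X_so Y_so.
apply: f_inj; [exact: iter_contr_bracket_so | exact: so_subspace.1 |].
by rewrite iso_iter_contr_bracket // iso_f0 slt_iter_lie_eq0 //; apply: f_slt.
Qed.

Lemma iter_lie_sub_contr_bracket_in_t k X Y : t X -> so Y ->
  t (iter k (lie X) Y - iter k (contr X) Y).
Proof.
move=> X_t Y_so; elim: k => [|k IHk] /=; first by rewrite subrr; exact: t_sub.1.
set L := iter k (lie X) Y; set D := iter k (contr X) Y.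
have -> : lie X L - contr X D = lie X (L - D) + (lie X D - contr X D).
  by rewrite lieBr addrA subrK.
apply: subspaceD t_sub (t_lie _ _ X_t IHk) _.
apply: lie_sub_contr_bracket_in_t => //.
exact: iter_contr_bracket_so (t_so _ X_t) Y_so.
Qed.

Lemma iter_contr_bracket_tt k X W : t X -> t W ->
  iter k (contr X) W = iter k (lie X) W.
Proof.
move=> X_t; elim: k W => [|k IHk] W W_t //.
by rewrite !iterSr contr_bracket_tt // IHk //; exact: t_lie.
Qed.

Lemma iter_lie_t_eq0 X Y : t X -> so Y -> iter (m + m) (lie X) Y = 0.
Proof.
move=> X_t Y_so; have X_so := t_so _ X_t.
have W_t : t (iter m (lie X) Y).
  have := iter_lie_sub_contr_bracket_in_t m X Y X_t Y_so.
  by rewrite iter_contr_bracket_eq0 // subr0.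
by rewrite iterD -iter_contr_bracket_tt // iter_contr_bracket_eq0 //; exact: t_so.
Qed.

Hypothesis m_ge3 : (3 <= m)%N.

Lemma t_eq0 X : t X -> X = 0.
Proof.
move=> X_t; have X_so := t_so _ X_t.
apply: (so_center_eq0 X m_ge3 X_so) => Y Y_so.
apply: (so_iter_lie_eq0 X Y (m + m).-1 X_so).
by rewrite prednK ?iter_lie_t_eq0 //; lia.
Qed.

Lemma contr_bracket_eq0 X Y : so X -> so Y -> contr X Y = 0.
Proof.
move=> X_so Y_so.
have [cpX0 cpY0] : cp X = 0 /\ cp Y = 0.
  by split; apply: t_eq0; [exact: (comp_tP X_so).1 | exact: (comp_tP Y_so).1].
by rewrite contr_bracketE // cpX0 cpY0 !(lie0l, lie0r, addr0) comp_t0 subrr addr0.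
Qed.

End Isomorphism.

End Contraction.

Theorem lemma2p5 (R : realType) (m : nat) : (3 <= m)%N ->
  forall t tc : set 'M[R]_m,
    is_lie_subalgebra_so t -> is_complement_so t tc ->
    ~ exists f : 'M[R]_m -> 'M[R]_m, contraction_iso_slt t tc f.
Proof.
move=> m_ge3 t tc t_alg tc_compl [f f_iso].
have [Z [W [Z_slt W_slt ZW_neq0]]] := slt_nonabelian (R := R) m_ge3.
have [_ _ _ f_surj f_hom] := f_iso.
apply: ZW_neq0.
have [X X_so <-] := f_surj Z Z_slt; have [Y Y_so <-] := f_surj W W_slt.
rewrite -f_hom // (contr_bracket_eq0 t_alg tc_compl f f_iso m_ge3) //.
exact: iso_f0 f f_iso.
Qed.
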